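(* Let $k,r,h$ be positive integers such that $\ell=\frac{k+h}{r}$ is an integer, and let $q$ be a prime power with $q\le\binom{\lfloor k/2\rfloor}{h-1}$. Consider a local $(k,r,h)$-code $C$ over $\mathbb{F}_q$ in which all coefficients of the heavy parities (i.e. the coefficients $c_{j,i}$ in heavy parity $j$ equal to $\sum_{i=1}^k c_{j,i}x_i$, $j\in[h]$, where $x_1,\dots,x_k$ are the data symbols) are drawn uniformly and independently at random from $\mathbb{F}_q$ (the grouping being fixed). Then the probability that $C$ is maximally recoverable is at most $\left(1-\frac{1}{2^h e^{h-1}}\right)^{k/2}$.
   Context: A local $(k,r,h)$-code over $\mathbb{F}_q$ (with $r\mid(k+h)$) is a linear systematic code of dimension $k$ and length $k+h+\frac{k+h}{r}$ consisting of $k$ data symbols $x_1,\dots,x_k$, $h$ heavy parity symbols (each an $\mathbb{F}_q$-linear combination of all data symbols), and, after partitioning the $k+h$ data and heavy parity symbols into $\frac{k+h}{r}$ groups of size $r$, one local parity per group equal to the sum of the group's symbols. A local group is such a group together with its local parity. The code is maximally recoverable if for every set $E$ of coordinates containing exactly one coordinate from each local group, puncturing the code in $E$ (deleting those coordinates) yields a maximum distance separable $[k+h,k]$ code (minimum distance $h+1$). *)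

From HB Require Import structures.
From mathcomp Require Import all_boot all_order all_algebra all_field.

Set Implicit Arguments. Unset Strict Implicit. Unset Printing Implicit Defensive.
Import GRing.Theory.
Local Open Scope ring_scope.

(* Data symbols x : 'rV_k; heavy parity j = \sum_i c j i * x i  (c : 'M_(h,k)).
   The k+h data+heavy symbols are indexed by 'I_(k+h): index s < k is data
   symbol s, index k + j is heavy parity j.
   The grouping is g : 'I_(k+h) -> 'I_l; local parity t = sum of the symbols s
   with g s = t.  Codeword coordinates: 'I_(k+h+l), the first k+h being the
   data/heavy symbols and the last l the local parities. *)

Section LocalCode.
Variables (F : finFieldType) (k h l : nat).

Definition heavy_gen (c : 'M[F]_(h, k)) : 'M[F]_(k, k + h) := row_mx 1%:M c^T.

Definition local_mx (g : 'I_(k + h) -> 'I_l) : 'M[F]_(k + h, l) :=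
  \matrix_(s, t) (g s == t)%:R.

Definition local_gen (c : 'M[F]_(h, k)) (g : 'I_(k + h) -> 'I_l)
  : 'M[F]_(k, k + h + l) :=
  row_mx (heavy_gen c) (heavy_gen c *m local_mx g).

Definition local_group (g : 'I_(k + h) -> 'I_l) (t : 'I_l) : {set 'I_(k + h + l)} :=
  [set i | match fintype.split i with inl s => g s == t | inr t' => t' == t end].

Definition punct_wt n (E : {set 'I_n}) (x : 'rV[F]_n) : nat :=
  #|[set i | (i \notin E) && (x 0 i != 0)]|.

(* The code generated by G (codewords m *m G), punctured in E, has dimension k
   (the message-to-punctured-codeword map is injective) and minimum distance d. *)
Definition punctured_dim_dist n (G : 'M[F]_(k, n)) (E : {set 'I_n}) (d : nat) : Prop :=
  [/\ (forall m : 'rV[F]_k, m != 0 -> exists i, i \notin E /\ (m *m G) 0 i != 0),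
      (forall m : 'rV[F]_k, m != 0 -> (d <= punct_wt E (m *m G))%N) &
      (exists m : 'rV[F]_k, m != 0 /\ punct_wt E (m *m G) = d)].

(* Maximal recoverability: for every E containing exactly one coordinate from
   each local group, the punctured code is an MDS [k+h,k] code, i.e. has
   dimension k and minimum distance h+1. *)
Definition max_recoverable (c : 'M[F]_(h, k)) (g : 'I_(k + h) -> 'I_l) : Prop :=
  forall E : {set 'I_(k + h + l)},
    (forall t : 'I_l, #|E :&: local_group g t| = 1%N) ->
    punctured_dim_dist (local_gen c g) E h.+1.

End LocalCode.

From HB Require Import structures.
From mathcomp Require Import all_boot all_order all_algebra all_field zify ring.

Set Implicit Arguments. Unset Strict Implicit. Unset Printing Implicit Defensive.
Import GRing.Theory.

(* Maximal recoverability (puncture all local parities) forces any h rows of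
   the k x h matrix c^T to be linearly independent.  Split these rows into the
   first k/2 and the last ~k/2.  Fix the first block U.  Since
   q <= C(k/2, h-1), one can pick q distinct (h-1)-subsets of rows of U; their
   spans have q^(h-1) elements each and pairwise intersections of size at most
   q^(h-2), so by the second Bonferroni inequality they cover at least half of
   F^h.  Every remaining row must avoid all these spans, so it has at most
   q^h/2 choices.  Hence at most a 2^(-k/2) fraction of all c is maximally
   recoverable, and 2^(-k/2) is below the stated bound. *)

Lemma card_bigcup_bonferroni (I T : finType) (A : I -> {set T}) :
  (2 * \sum_i #|A i| <= 2 * #|\bigcup_i A i| +
     \sum_i \sum_(j | j != i) #|A i :&: A j|)%N.
Proof.
have cardE (B : {set T}) : #|B| = (\sum_v (v \in B : nat))%N.
  by rewrite -sum1_card big_mkcond /=; apply: eq_bigr => v _; case: (v \in B).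
under eq_bigr do rewrite cardE.
under [X in _ <= _ + X]eq_bigr do under eq_bigr do rewrite cardE.
rewrite cardE exchange_big /= !big_distrr /=.
have -> : \sum_i \sum_(j | j != i) \sum_v (v \in A i :&: A j : nat) =
          \sum_v \sum_i \sum_(j | j != i) (v \in A i :&: A j : nat).
  by rewrite exchange_big /=; apply: eq_bigr => i _; rewrite exchange_big.
rewrite -!big_split /=; apply: leq_sum => v _.
set n := \sum_i (v \in A i : nat).
have pairsE : \sum_i \sum_(j | j != i) (v \in A i :&: A j : nat) = n * n - n.
  apply/eqP; rewrite -(eqn_add2r n) subnK; last by nia.
  rewrite /n big_distrl /= -big_split /=; apply/eqP/eq_bigr => i _.
  rewrite big_distrr /= [in RHS](bigD1 i) //= addnC.
  congr (_ + _); first by case: (v \in A i).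
  by apply: eq_bigr => j _; rewrite inE; case: (v \in A i); case: (v \in A j).
rewrite pairsE; case: (posnP n) => [n0|n_gt0]; first by rewrite n0.
have /existsP [i viA] : [exists i, v \in A i].
  apply: contraTT n_gt0 => /existsPn vA; rewrite -leqNgt leqn0 sum_nat_eq0.
  by apply/forallP => i; rewrite (negbTE (vA i)).
have -> : v \in \bigcup_i A i by apply/bigcupP; exists i.
rewrite muln1; have : (n <= 2 \/ 3 <= n)%N by lia.
by case; nia.
Qed.

Local Open Scope ring_scope.

Section RowCombinations.
Variable F : finFieldType.
Local Notation q := #|F|.

Definition supp n (a : 'rV[F]_n) : {set 'I_n} := [set i | a 0 i != 0].

Definition free_rows (s : nat) n h (D : 'M[F]_(n, h)) : Prop :=
  forall a : 'rV[F]_n, a != 0 -> (#|supp a| <= s)%N -> a *m D != 0.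

Definition combs n h (D : 'M[F]_(n, h)) (T : {set 'I_n}) : {set 'rV[F]_h} :=
  [set a *m D | a in [set a : 'rV[F]_n | supp a \subset T]].

Definition outside_combs (t : nat) n h (D : 'M[F]_(n, h)) : {set 'rV[F]_h} :=
  [set v | [forall T : {set 'I_n}, (#|T| == t) ==> (v \notin combs D T)]].

Lemma supp0 n : supp (0 : 'rV[F]_n) = set0.
Proof. by apply/setP => i; rewrite !inE mxE eqxx. Qed.

Lemma suppB n (a b : 'rV[F]_n) : supp (a - b) \subset supp a :|: supp b.
Proof.
apply/subsetP => i; rewrite !inE !mxE; apply: contraR.
by rewrite negb_or !negbK => /andP[/eqP-> /eqP->]; rewrite subrr.
Qed.

Lemma supp_row_mx n1 n2 (a : 'rV[F]_n1) (b : 'rV[F]_n2) :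
  (#|supp (row_mx a b)| <= #|supp a| + #|supp b|)%N.
Proof.
have sub : supp (row_mx a b) \subset @lshift n1 n2 @: supp a :|: @rshift n1 n2 @: supp b.
  apply/subsetP => i; rewrite inE; case: (split_ordP i) => j ->.
    by rewrite row_mxEl => nz; rewrite inE imset_f // inE.
  by rewrite row_mxEr => nz; rewrite inE imset_f ?orbT // inE.
apply: leq_trans (subset_leq_card sub) _; apply: leq_trans (leq_card_setU _ _) _.
by apply: leq_add; apply: leq_imset_card.
Qed.

Lemma card_supp_subset n (T : {set 'I_n}) :
  #|[set a : 'rV[F]_n | supp a \subset T]| = (q ^ #|T|)%N.
Proof.
rewrite -cardsT -(card_pffun_on 0 T [set: F]).
have -> : [set a : 'rV[F]_n | supp a \subset T] =
          (fun f : {ffun 'I_n -> F} => \row_i f i) @: [set f in pffun_on 0 T [set: F]].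
  apply/setP => a; rewrite inE; apply/idP/imsetP => [sT | [f]].
    exists [ffun i => a 0 i]; last by apply/rowP => i; rewrite mxE ffunE.
    rewrite inE; apply/pffun_onP; split=> [|x]; last by rewrite inE.
    by apply/subsetP => i; rewrite !inE ffunE => nz; apply: (subsetP sT); rewrite inE.
  rewrite inE => /pffun_onP [/subsetP sf _] ->.
  by apply/subsetP => i; rewrite inE mxE => nz; apply: sf.
rewrite card_in_imset => [|f1 f2 _ _ /rowP e]; first by apply: eq_card => f; rewrite inE.
by apply/ffunP => i; move: (e i); rewrite !mxE.
Qed.

Lemma supp_subset_eq0 n (a : 'rV[F]_n) (T : {set 'I_n}) i :
  supp a \subset T -> i \notin T -> a 0 i = 0.
Proof.
move=> /subsetP sT iT; apply/eqP; apply: contraNT iT => nz.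
by apply: sT; rewrite inE.
Qed.

Section FreeRows.
Variables (s n h : nat) (D : 'M[F]_(n, h)).
Hypothesis freeD : free_rows s D.

Lemma card_combs (T : {set 'I_n}) : (#|T| <= s)%N -> #|combs D T| = (q ^ #|T|)%N.
Proof.
move=> Ts; rewrite card_in_imset ?card_supp_subset // => a1 a2.
rewrite !inE => s1 s2 e; apply/eqP; rewrite -subr_eq0; apply: contraTT isT => nz.
have sT : supp (a1 - a2) \subset T.
  by apply: subset_trans (suppB _ _) _; rewrite subUset s1.
have := freeD nz (leq_trans (subset_leq_card sT) Ts).
by rewrite mulmxBl e subrr eqxx.
Qed.

(* Two distinct t-sets of rows differ by some x; a common combination is
   determined by its coefficients off x, since the coefficient at x is forced
   to be 0 by the independence of the t+1 rows in x |: T. *)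
Lemma card_combs_cap (t : nat) (T T' : {set 'I_n}) :
  (t < s)%N -> #|T| = t -> #|T'| = t -> T != T' ->
  (#|combs D T :&: combs D T'| <= q ^ t.-1)%N.
Proof.
move=> ts cT cT' neqTT'.
have [x xT' xT] : exists2 x, x \in T' & x \notin T.
  apply/subsetPn; apply: contra neqTT' => sub.
  by rewrite eq_sym eqEcard sub cT cT' leqnn.
pose P := [set a : 'rV[F]_n | (supp a \subset T') && (a *m D \in combs D T)].
have capP : combs D T :&: combs D T' \subset (fun a => a *m D) @: P.
  apply/subsetP => v; rewrite inE => /andP [vT /imsetP [a]]; rewrite inE => sa ev.
  by apply/imsetP; exists a; rewrite // inE sa -ev vT.
apply: leq_trans (subset_leq_card capP) _; apply: leq_trans (leq_imset_card _ _) _.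
pose drop_x (a : 'rV[F]_n) := a - a 0 x *: delta_mx 0 x.
have drop_x_inj : {in P &, injective drop_x}.
  move=> a1 a2; rewrite !inE => /andP [_ /imsetP [b1]]; rewrite inE => sb1 e1.
  move=> /andP [_ /imsetP [b2]]; rewrite inE => sb2 e2 ez.
  pose al := a1 0 x - a2 0 x.
  have ea : a1 - a2 = al *: delta_mx 0 x.
    apply/rowP => i; have := congr1 (fun u : 'rV[F]_n => u 0 i) ez.
    by rewrite /drop_x !mxE => /eqP; rewrite subr_eq => /eqP ->; rewrite /al; ring.
  pose w := al *: delta_mx 0 x - (b1 - b2).
  have w0 : w = 0.
    apply: contraTeq isT => nz.
    have sw : supp w \subset x |: T.
      apply/subsetP => i; rewrite !inE !mxE; case: (eqVneq i x) => //= _.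
      rewrite mulr0 add0r; apply: contraR => iT.
      by rewrite (supp_subset_eq0 sb1 iT) (supp_subset_eq0 sb2 iT) subrr oppr0.
    have cw : (#|supp w| <= s)%N.
      by apply: leq_trans (subset_leq_card sw) _; rewrite cardsU1 xT cT.
    by have := freeD nz cw; rewrite /w mulmxBl -ea !mulmxBl -e1 -e2 subrr eqxx.
  have : w 0 x = 0 by rewrite w0 mxE.
  rewrite /w !mxE (supp_subset_eq0 sb1 xT) (supp_subset_eq0 sb2 xT) !eqxx.
  rewrite mulr1 subrr subr0 => al0.
  by apply/eqP; rewrite -subr_eq0 ea al0 scale0r.
rewrite -(card_in_imset drop_x_inj).
have imP : drop_x @: P \subset [set b : 'rV[F]_n | supp b \subset T' :\ x].
  apply/subsetP => b /imsetP [a]; rewrite inE => /andP [sa _] ->; rewrite inE.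
  apply/subsetP => i; rewrite !inE /drop_x !mxE; case: (eqVneq i x) => [->|nix].
    by rewrite !eqxx mulr1 subrr eqxx.
  by rewrite /= mulr0 subr0 => nz; apply: (subsetP sa); rewrite inE.
apply: leq_trans (subset_leq_card imP) _.
by rewrite card_supp_subset -cT' (cardsD1 x T') xT'.
Qed.

End FreeRows.

Lemma card_outside_combs n h (D : 'M[F]_(n, h)) :
  (1 < h)%N -> free_rows h D -> (q <= 'C(n, h.-1))%N ->
  (2 * #|outside_combs h.-1 D| <= q ^ h)%N.
Proof.
move=> h_gt1 freeD qC.
have [t ht] : exists t, h = t.+2 by exists h.-2; lia.
have q_gt0 : (0 < q)%N by apply/card_gt0P; exists 0.
pose Ts := [set T : {set 'I_n} | #|T| == h.-1].
have le_q_Ts : (q <= #|Ts|)%N by rewrite card_draws card_ord.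
pose tau (x : F) : {set 'I_n} := enum_val (widen_ord le_q_Ts (enum_rank x)).
have card_tau x : #|tau x| = h.-1.
  by apply/eqP; have := enum_valP (widen_ord le_q_Ts (enum_rank x)); rewrite inE.
have tau_inj : injective tau.
  move=> x y /enum_val_inj /(congr1 val) /= e; apply: enum_rank_inj; exact: val_inj.
pose A x := combs D (tau x).
have outsideU : outside_combs h.-1 D \subset ~: \bigcup_x A x.
  apply/subsetP => v; rewrite !inE => /forallP outv; apply/bigcupP => [[x _ vA]].
  by move: (outv (tau x)); rewrite card_tau eqxx vA.
have cardA x : #|A x| = (q ^ t.+1)%N by rewrite (card_combs freeD) card_tau ht.
have cardAA x y : y != x -> (#|A x :&: A y| <= q ^ t)%N.
  move=> nxy; have := card_combs_cap freeD _ (card_tau x) (card_tau y).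
  rewrite (_ : h.-2 = t); last by rewrite ht.
  apply; first by lia.
  by apply: contra nxy => /eqP/tau_inj->.
have := card_bigcup_bonferroni A; under eq_bigr do rewrite cardA.
rewrite sum_nat_const => bonf.
have sumAA : (\sum_x \sum_(y | y != x) #|A x :&: A y| <= q * (q.-1 * q ^ t))%N.
  rewrite -sum_nat_const; apply: leq_sum => x _.
  apply: (@leq_trans (\sum_(y | y != x) q ^ t)%N); first exact: leq_sum (cardAA x).
  by rewrite sum_nat_const cardC1.
have cardU : (#|\bigcup_x A x| + #|~: \bigcup_x A x| = q ^ h)%N.
  by rewrite cardsC card_mx mul1n.
(* For U the union and p = q^(h-2), Bonferroni gives 2 #|U| >= q^2 p + q p. *)
have := subset_leq_card outsideU; move: bonf sumAA cardU.
set o := #|outside_combs _ _|; set c := #|\bigcup_x A x|; set c' := #|~: _|.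
have -> : (q ^ h = q * (q * q ^ t))%N by rewrite ht !expnS.
rewrite expnS; set S := (\sum_x _)%N; set p := (q ^ t)%N.
case: q q_gt0 => // q' _; nia.
Qed.

Lemma free_rows_col_mx s n0 m h (U : 'M[F]_(n0, h)) (L : 'M[F]_(m, h)) :
  (0 < s)%N -> free_rows s (col_mx U L) ->
  free_rows s U /\ forall j, row j L \in outside_combs s.-1 U.
Proof.
move=> s_gt0 freeUL; split=> [a nz sa | j].
  have := freeUL (row_mx a 0); rewrite mul_row_col mul0mx addr0; apply.
    by rewrite row_mx_eq0 negb_and nz.
  by apply: leq_trans (supp_row_mx _ _) _; rewrite supp0 cards0 addn0.
rewrite inE; apply/forallP => T; apply/implyP => /eqP cT.
apply/imsetP => -[a]; rewrite inE => sa ev.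
have e_j_nz : - delta_mx 0 j != 0 :> 'rV[F]_m.
  by rewrite oppr_eq0; apply/eqP => /matrixP /(_ 0 j); rewrite !mxE !eqxx; apply/eqP/oner_neq0.
have := freeUL (row_mx a (- delta_mx 0 j)).
rewrite mul_row_col mulNmx -rowE -ev subrr eqxx row_mx_eq0 negb_and e_j_nz orbT.
suff supp_le : (#|supp (row_mx a (- delta_mx 0 j)%R)| <= s)%N by move/(_ isT supp_le).
apply: leq_trans (supp_row_mx _ _) _.
have supp_e_j : (#|supp (- delta_mx 0 j : 'rV[F]_m)%R| <= 1)%N.
  apply: (@leq_trans #|[set j]|); last by rewrite cards1.
  apply: subset_leq_card; apply/subsetP => i.
  by rewrite !inE !mxE; case: (eqVneq i j) => // _; rewrite andbF oppr0 eqxx.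
apply: leq_trans (leq_add (subset_leq_card sa) supp_e_j) _.
by rewrite cT addn1 prednK.
Qed.

Lemma card_rows_in m h (S : {set 'rV[F]_h}) :
  #|[set L : 'M[F]_(m, h) | [forall j, row j L \in S]]| = (#|S| ^ m)%N.
Proof.
rewrite -[m in RHS]card_ord -card_ffun_on.
have -> : [set L : 'M[F]_(m, h) | [forall j, row j L \in S]] =
          (fun f : {ffun 'I_m -> 'rV[F]_h} => \matrix_j f j) @: [set f in ffun_on S].
  apply/setP => L; rewrite inE; apply/forallP/imsetP => [SL | [f]].
    exists [ffun j => row j L]; last by apply/row_matrixP => j; rewrite rowK ffunE.
    by rewrite inE; apply/ffun_onP => j; rewrite ffunE.
  by rewrite inE => /ffun_onP Sf -> j; rewrite rowK.
rewrite card_in_imset => [|f1 f2 _ _ e]; first by apply: eq_card => f; rewrite inE.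
by apply/ffunP => j; rewrite -[f1 j](rowK f1) -[f2 j](rowK f2) e.
Qed.

Lemma card_col_mx_fibres n0 m h (G : {set 'M[F]_(n0 + m, h)}) :
  #|G| = (\sum_(U : 'M[F]_(n0, h)) #|[set L : 'M[F]_(m, h) | col_mx U L \in G]|)%N.
Proof.
under [RHS]eq_bigr do rewrite -sum1_card.
rewrite pair_big_dep /= -sum1_card (reindex (fun p => col_mx p.1 p.2)) /=.
  by apply: eq_bigl => -[U L]; rewrite inE.
by exists (fun D => (usubmx D, dsubmx D)) => [[U L] _ | D _];
  rewrite ?col_mxKu ?col_mxKd ?vsubmxK.
Qed.

Lemma card_free_rows n0 m h (G : {set 'M[F]_(n0 + m, h)}) :
  (1 < h)%N -> (q <= 'C(n0, h.-1))%N -> (forall D, D \in G -> free_rows h D) ->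
  (2 ^ m * #|G| <= q ^ (h * (n0 + m)))%N.
Proof.
move=> h_gt1 qC freeG; rewrite card_col_mx_fibres big_distrr /=.
apply: (@leq_trans (\sum_(U : 'M[F]_(n0, h)) (q ^ h) ^ m)%N); last first.
  by rewrite sum_nat_const card_mx -!expnM -expnD mulnDr mulnC.
apply: leq_sum => U _.
have [[L GL] | noL] := pickP (fun L => col_mx U L \in G); last first.
  rewrite (_ : [set L | _] = set0) ?cards0 ?muln0 //.
  by apply/setP => L; rewrite !inE noL.
have [freeU _] := free_rows_col_mx (ltnW h_gt1) (freeG _ GL).
have fibre_sub : [set L | col_mx U L \in G] \subset
                 [set L : 'M[F]_(m, h) | [forall j, row j L \in outside_combs h.-1 U]].
  apply/subsetP => L'; rewrite !inE => GL'; apply/forallP => j.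
  by have [_] := free_rows_col_mx (ltnW h_gt1) (freeG _ GL'); apply.
apply: leq_trans (leq_mul (leqnn _) (subset_leq_card fibre_sub)) _.
rewrite card_rows_in -expnMn.
have := card_outside_combs h_gt1 freeU qC.
by case: (posnP m) => [->|m_gt0]; rewrite ?expn0 // leq_exp2r.
Qed.

Lemma max_recoverable_free_rows k h l (g : 'I_(k + h) -> 'I_l) (c : 'M[F]_(h, k)) :
  max_recoverable c g -> free_rows h c^T.
Proof.
move=> MR a nz ca; apply/negP => /eqP ac0.
pose E := [set rshift (k + h) t | t : 'I_l].
have split_E t : fintype.split (rshift (k + h) t) = inr t := unsplitK (inr t).
have E_meets_groups t : #|E :&: local_group g t| = 1%N.
  rewrite -(cards1 (rshift (k + h) t)); apply: eq_card => i; rewrite !inE.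
  apply/andP/eqP => [[/imsetP [t' _ ->]] | ->]; rewrite split_E ?imset_f //.
  by move=> /eqP->.
have [_ wt_ge _] := MR E E_meets_groups.
have := wt_ge a nz; rewrite /punct_wt.
have -> : a *m local_gen c g = row_mx (row_mx a 0) (row_mx a 0 *m local_mx F g).
  by rewrite /local_gen /heavy_gen !mul_mx_row mulmxA mul_mx_row mulmx1 ac0.
set S := [set i | _]; have S_sub : S \subset lshift l @: (lshift h @: supp a).
  apply/subsetP => i; rewrite inE; case: (split_ordP i) => j ->.
    rewrite row_mxEl; case: (split_ordP j) => j' -> /andP [_].
      by rewrite row_mxEl => nz'; rewrite !imset_f // inE.
    by rewrite row_mxEr mxE eqxx.
  by rewrite imset_f.
have card_S : (#|S| <= #|supp a|)%N.
  apply: leq_trans (subset_leq_card S_sub) _.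
  by apply: leq_trans (leq_imset_card _ _) (leq_imset_card _ _).
by move=> /leq_trans /(_ card_S); rewrite ltnNge ca.
Qed.

Lemma card_max_recoverable k h l (g : 'I_(k + h) -> 'I_l) (MR : {set 'M[F]_(h, k)}) :
  (0 < h)%N -> (q <= 'C(k./2, h.-1))%N -> (forall c, c \in MR -> max_recoverable c g) ->
  (2 ^ uphalf k * #|MR| <= q ^ (h * k))%N.
Proof.
move=> h_gt0 qC MR_rec.
have h_gt1 : (1 < h)%N.
  rewrite ltn_neqAle h_gt0 andbT; apply: contraTneq qC => h1.
  by rewrite -h1 bin0 -ltnNge card_finNzRing_gt1.
have ek : k = (k./2 + uphalf k)%N.
  by have := odd_double_half k; rewrite uphalf_half -addnn; lia.
have := @card_free_rows k./2 (uphalf k) h; rewrite -ek.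
move=> /(_ [set c^T | c in MR] h_gt1 qC); rewrite card_imset; last exact: trmx_inj.
by apply=> _ /imsetP [c /MR_rec MRc ->]; apply: max_recoverable_free_rows MRc.
Qed.

End RowCombinations.

From Stdlib Require Import Reals Lra Psatz.
Local Close Scope ring_scope.
Local Open Scope R_scope.

Lemma INR_expn a b : INR (expn a b) = INR a ^ b.
Proof. by elim: b => // b IH; rewrite expnS -multE mult_INR IH. Qed.

Lemma ratio_le_inv_pow2 (N T : R) (m : nat) :
  0 < T -> 2 ^ m * N <= T -> N / T <= / 2 ^ m.
Proof.
move=> T_pos le_NT; have pow_pos : 0 < 2 ^ m by apply: pow_lt; lra.
apply: (Rmult_le_reg_l (2 ^ m * T)); first nra.
by field_simplify; lra.
Qed.

Lemma inv_pow2_le_Rpower (x y : R) (m : nat) :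
  / 2 <= x -> 0 <= y <= INR m -> / 2 ^ m <= Rpower x y.
Proof.
move=> half_x [y_ge0 y_le_m].
apply: (Rle_trans _ (Rpower (/ 2) y)); last by apply: Rle_Rpower_l; lra.
have -> : Rpower (/ 2) y = / Rpower 2 y.
  by rewrite /Rpower ln_Rinv -?exp_Ropp; [congr exp; ring | lra].
rewrite -Rpower_pow; last lra.
by apply: Rinv_le_contravar; [apply: exp_pos | apply: Rle_Rpower; lra].
Qed.

Lemma half_le_one_sub_inv (h : nat) :
  (0 < h)%nat -> / 2 <= 1 - / (2 ^ h * exp 1 ^ (h - 1)).
Proof.
move=> h_gt0.
have e_ge1 : 1 <= exp 1 ^ (h - 1).
  by apply: pow_R1_Rle; have := exp_ineq1_le 1; lra.
have two_le : 2 <= 2 ^ h.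
  rewrite -(prednK h_gt0) /=.
  have : 1 <= 2 ^ h.-1 by apply: pow_R1_Rle; lra.
  lra.
have : / (2 ^ h * exp 1 ^ (h - 1)) <= / 2 by apply: Rinv_le_contravar; nra.
lra.
Qed.

Local Close Scope R_scope.

Theorem theorem20 (F : finFieldType) (k r h l : nat)
  (g : 'I_(k + h) -> 'I_l) :
  (0 < k)%N -> (0 < r)%N -> (0 < h)%N ->
  (l * r = k + h)%N ->
  (forall t : 'I_l, #|[set s | g s == t]| = r) ->
  (#|F| <= 'C(k./2, h.-1))%N ->
  forall MR : {set 'M[F]_(h, k)},
  (forall c : 'M[F]_(h, k), c \in MR <-> max_recoverable c g) ->
  (INR #|MR|
     / INR #|{: 'M[F]_(h, k)}|
   <= Rpower (1 - / (pow 2 h * pow (exp 1) (h - 1))) (INR k / 2))%R.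
Proof.
move=> _ _ h_gt0 _ _ qC MR MRE.
have count := card_max_recoverable h_gt0 qC (fun c => proj1 (MRE c)).
rewrite card_mx; apply: (Rle_trans _ (/ 2 ^ uphalf k)).
  apply: ratio_le_inv_pow2.
    by rewrite INR_expn; apply/pow_lt/lt_0_INR/ltP/ltnW/card_finNzRing_gt1.
  have INR2 : INR 2 = 2%R by rewrite /=; lra.
  by move/leP/le_INR: count; rewrite -multE mult_INR !INR_expn INR2.
apply: inv_pow2_le_Rpower; first exact: half_le_one_sub_inv.
split; first by have := pos_INR k; lra.
have /leP/le_INR : (k <= (uphalf k).*2)%nat by rewrite uphalfK leq_addl.
by rewrite -addnn -plusE plus_INR => le_k; clear -le_k; lra.
Qed.
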